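(* Let $S$ be a connected graded reduced affine monoid. Then the graded catenary degree $c_{\mathrm{gr}}(S)$ is the minimal non-negative integer $d$ such that there exists a subset $\Lambda\subset M\times M$ generating the semigroup congruence $\sim_S$ with $|\alpha|_{\mathrm{gr}}\le d$ and $|\gamma|_{\mathrm{gr}}\le d$ for all $(x^{\alpha},x^{\gamma})\in\Lambda$.
   Context: A monoid is a commutative cancellative semigroup with identity; affine means a finitely generated submonoid of a finitely generated free abelian group; reduced means the identity is the only unit. $S$ is graded if $S$ is the disjoint union of subsets $S_d$, $d\in\mathbb{N}_0$, with $S_dS_e\subseteq S_{d+e}$; write $|s|=d$ for $s\in S_d$; connected graded means $S_0=\{1\}$. $\mathcal{A}(S)$ is the finite set of atoms; $a^{\alpha}=\prod_a a^{\alpha(a)}$ for $\alpha\in\mathbb{N}_0^{\mathcal{A}(S)}$. $M$ is the free commutative monoid on indeterminates $x_a$ ($a\in\mathcal{A}(S)$), with elements $x^{\alpha}$, and $\sim_S$ is the congruence on $M$ with $x^{\alpha}\sim_S x^{\gamma}$ iff $a^{\alpha}=a^{\gamma}$. Set $|\alpha|_{\mathrm{gr}}=\sum_a\alpha(a)|a|$, $\gcd(\alpha,\gamma)(a)=\min\{\alpha(a),\gamma(a)\}$, and $d_{\mathrm{gr}}(\alpha,\gamma)=\max\{|\alpha-\gcd(\alpha,\gamma)|_{\mathrm{gr}},|\gamma-\gcd(\alpha,\gamma)|_{\mathrm{gr}}\}$. The graded catenary degree $c_{\mathrm{gr}}(S)$ is the minimal $d$ such that whenever $a^{\alpha}=a^{\gamma}$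 there is a sequence $\alpha=\alpha^{(0)},\dots,\alpha^{(k)}=\gamma$ in $\mathbb{N}_0^{\mathcal{A}(S)}$ with $a^{\alpha^{(j)}}=a^{\alpha^{(j+1)}}$ and $d_{\mathrm{gr}}(\alpha^{(j)},\alpha^{(j+1)})\le d$ for all $j$. *)

From HB Require Import structures.
From mathcomp Require Import all_boot all_order all_algebra.
From mathcomp Require Import finmap multiset.
Set Implicit Arguments. Unset Strict Implicit. Unset Printing Implicit Defensive.
Import Order.TTheory GRing.Theory Num.Theory.

Local Open Scope ring_scope.

Notation vec n := 'rV[int]_n.

Definition inS (n : nat) (gens : seq (vec n)) (v : vec n) : Prop :=
  exists c : 'I_(size gens) -> nat,
    v = \sum_(i < size gens) (nth 0 gens i) *+ c i.

Definition is_unitS n (gens : seq (vec n)) (u : vec n) : Prop :=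
  inS gens u /\ exists w, inS gens w /\ u + w = 0.

Definition reduced n (gens : seq (vec n)) : Prop :=
  forall u, is_unitS gens u -> u = 0.

(* graded: S = disjoint union of S_d = deg^-1(d), with S_d + S_e in S_{d+e} *)
Definition graded n (gens : seq (vec n)) (deg : vec n -> nat) : Prop :=
  forall s t, inS gens s -> inS gens t -> deg (s + t) = (deg s + deg t)%N.

Definition connected n (gens : seq (vec n)) (deg : vec n -> nat) : Prop :=
  forall s, inS gens s -> deg s = 0%N -> s = 0.

Definition is_atom n (gens : seq (vec n)) (a : vec n) : Prop :=
  [/\ inS gens a, ~ is_unitS gens a &
      forall b c, inS gens b -> inS gens c -> a = b + c ->
        is_unitS gens b \/ is_unitS gens c].

(* Elements x^alpha of the free commutative monoid M on the atoms,
   i.e. alpha in N_0^{A(S)}, represented as finite multisets of atoms. *)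
Definition inM n (gens : seq (vec n)) (alpha : {mset vec n}%mset) : Prop :=
  forall v, v \in enum_mset alpha -> is_atom gens v.

Definition evalM n (alpha : {mset vec n}%mset) : vec n :=
  \sum_(v <- enum_mset alpha) v.

Definition gdeg n (deg : vec n -> nat) (alpha : {mset vec n}%mset) : nat :=
  (\sum_(v <- enum_mset alpha) deg v)%N.

Definition dgr n (deg : vec n -> nat) (alpha gamma : {mset vec n}%mset) : nat :=
  maxn (gdeg deg (msetB alpha (msetI alpha gamma)))
       (gdeg deg (msetB gamma (msetI alpha gamma))).

Definition simS n (gens : seq (vec n)) (alpha gamma : {mset vec n}%mset) : Prop :=
  [/\ inM gens alpha, inM gens gamma & evalM alpha = evalM gamma].

Definition gr_catenary_bound n (gens : seq (vec n)) (deg : vec n -> nat)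
    (d : nat) : Prop :=
  forall alpha gamma, simS gens alpha gamma ->
    exists (k : nat) (f : nat -> {mset vec n}%mset),
      [/\ f 0%N = alpha, f k = gamma &
          forall j, (j < k)%N ->
            [/\ inM gens (f j), inM gens (f j.+1),
                evalM (f j) = evalM (f j.+1) & (dgr deg (f j) (f j.+1) <= d)%N]].

Definition congruenceM n (gens : seq (vec n))
    (C : {mset vec n}%mset -> {mset vec n}%mset -> Prop) : Prop :=
  [/\ (forall a b, C a b -> inM gens a /\ inM gens b),
      (forall a, inM gens a -> C a a),
      (forall a b, C a b -> C b a),
      (forall a b c, C a b -> C b c -> C a c) &
      (forall a b c, C a b -> inM gens c -> C (msetD a c) (msetD b c))].

Definition cong_gen n (gens : seq (vec n))
    (Lam : {mset vec n}%mset -> {mset vec n}%mset -> Prop)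
    (a b : {mset vec n}%mset) : Prop :=
  forall C, congruenceM gens C -> (forall p q, Lam p q -> C p q) -> C a b.

Definition generates_simS n (gens : seq (vec n))
    (Lam : {mset vec n}%mset -> {mset vec n}%mset -> Prop) : Prop :=
  (forall p q, Lam p q -> inM gens p /\ inM gens q) /\
  (forall a b, simS gens a b <-> cong_gen gens Lam a b).

Definition gen_bound n (gens : seq (vec n)) (deg : vec n -> nat) (d : nat) : Prop :=
  exists Lam : {mset vec n}%mset -> {mset vec n}%mset -> Prop,
    generates_simS gens Lam /\
    forall p q, Lam p q -> (gdeg deg p <= d)%N /\ (gdeg deg q <= d)%N.

Definition is_min_nat (P : nat -> Prop) (d : nat) : Prop :=
  P d /\ forall e, P e -> (d <= e)%N.

(** A relation [Lam] generates [~_S] exactly when every pair of [~_S] is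
    joined by a chain of translates [(p + g, q + g)] of pairs [(p, q)] of
    [Lam] or of their inverses.  A chain step of graded distance at most [d]
    is the translate, by the common part [gcd(alpha, gamma)], of a related
    pair of graded degrees at most [d]; conversely a translate of a related
    pair of degrees at most [d] is a step of graded distance at most [d].
    So both conditions on [d] coincide, and so do their minima. *)
From mathcomp Require Import all_boot all_order all_algebra.
From mathcomp Require Import finmap multiset.
From Stdlib Require Import Relation_Operators Operators_Properties.
Set Implicit Arguments. Unset Strict Implicit. Unset Printing Implicit Defensive.
Import GRing.Theory.
Local Open Scope ring_scope.
Local Open Scope mset_scope.

Section MultisetDegrees.
Variable n : nat.
Implicit Types (A B C : {mset 'rV[int]_n}).

Lemma perm_enum_msetD A B :
  perm_eq (enum_mset (A `+` B)) (enum_mset A ++ enum_mset B).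
Proof.
by apply/allP => x _ /=; rewrite count_cat !count_mem_mset msetE2.
Qed.

Lemma evalM_msetD A B : evalM (A `+` B) = evalM A + evalM B.
Proof. by rewrite /evalM (perm_big _ (perm_enum_msetD A B)) big_cat. Qed.

Lemma gdeg_msetD deg A B : gdeg deg (A `+` B) = (gdeg deg A + gdeg deg B)%N.
Proof. by rewrite /gdeg (perm_big _ (perm_enum_msetD A B)) big_cat. Qed.

Lemma inM_msetD gens A B : inM gens (A `+` B) <-> inM gens A /\ inM gens B.
Proof.
rewrite /inM; split=> [inAB | [inA inB] v].
  by split=> v vA; apply: inAB;
    rewrite (perm_mem (perm_enum_msetD A B)) mem_cat vA ?orbT.
by rewrite (perm_mem (perm_enum_msetD A B)) mem_cat => /orP[/inA | /inB].
Qed.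

Lemma inM_msubset gens A B : A `<=` B -> inM gens B -> inM gens A.
Proof. by move=> /msubset_subset AB inB v /AB /inB. Qed.

Lemma gdeg_msubset deg A B : A `<=` B -> (gdeg deg A <= gdeg deg B)%N.
Proof. by move=> AB; rewrite -(msetBDK AB) gdeg_msetD leq_addl. Qed.

Lemma dgrC deg A B : dgr deg A B = dgr deg B A.
Proof. by rewrite /dgr msetIC maxnC. Qed.

Lemma dgr_msetD2r deg A B C : dgr deg (A `+` C) (B `+` C) = dgr deg A B.
Proof. by rewrite /dgr -msetDIl !msetBDr. Qed.

Lemma dgr_le_gdeg deg A B : (dgr deg A B <= maxn (gdeg deg A) (gdeg deg B))%N.
Proof.
by rewrite /dgr geq_max !leq_max !(gdeg_msubset deg (msubsetDl _ _)) orbT.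
Qed.

End MultisetDegrees.

Section GradedChains.
Variables (n : nat) (gens : seq 'rV[int]_n) (deg : 'rV[int]_n -> nat) (d : nat).
Implicit Types (A B C : {mset 'rV[int]_n}).

Definition gr_step A B :=
  [/\ inM gens A, inM gens B, evalM A = evalM B & (dgr deg A B <= d)%N].

Definition gr_chain := clos_refl_trans _ gr_step.

Lemma gr_step_sym A B : gr_step A B -> gr_step B A.
Proof. by case=> inA inB eqAB le_d; split; rewrite // dgrC. Qed.

Lemma gr_step_msetD2r A B C : gr_step A B -> inM gens C -> gr_step (A `+` C) (B `+` C).
Proof.
case=> inA inB eqAB le_d inC.
by split; rewrite ?inM_msetD ?evalM_msetD ?eqAB ?dgr_msetD2r.
Qed.

Lemma gr_chain_sym A B : gr_chain A B -> gr_chain B A.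
Proof.
elim=> [X Y XY | X | X Y Z _ YX _ ZY].
- exact/rt_step/gr_step_sym.
- exact: rt_refl.
- exact: rt_trans ZY YX.
Qed.

Lemma gr_chain_msetD2r A B C : gr_chain A B -> inM gens C -> gr_chain (A `+` C) (B `+` C).
Proof.
move=> AB inC; elim: AB => [X Y XY | X | X Y Z _ XY _ YZ].
- exact/rt_step/gr_step_msetD2r.
- exact: rt_refl.
- exact: rt_trans XY YZ.
Qed.

Lemma gr_chainP A B :
  gr_chain A B <->
  exists (k : nat) (f : nat -> {mset 'rV[int]_n}),
    [/\ f 0%N = A, f k = B & forall j, (j < k)%N -> gr_step (f j) (f j.+1)].
Proof.
split=> [AB | [k [f [<- <- steps]]]].
  elim: (clos_rt_rt1n _ _ _ _ AB) => [X | X Y Z XY _ [k [f [f0 fk steps]]]].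
    by exists 0%N, (fun=> X).
  exists k.+1, (fun j => if j is j'.+1 then f j' else X); split=> //.
  by case=> [_|j]; [rewrite f0 | apply: steps].
elim: k f steps => [|k IHk] f steps; first exact: rt_refl.
apply: rt_trans (rt_step _ _ _ _ (steps 0%N isT)) (IHk (fun j => f j.+1) _) => j.
exact: steps j.+1.
Qed.

Lemma gr_catenary_boundP :
  gr_catenary_bound gens deg d <-> forall A B, simS gens A B -> gr_chain A B.
Proof. by split=> cat A B /cat/gr_chainP. Qed.

Lemma congruenceM_gr_chain :
  congruenceM gens (fun A B => [/\ inM gens A, inM gens B & gr_chain A B]).
Proof.
split.
- by move=> A B [].
- by move=> A inA; split=> //; apply: rt_refl.
- by move=> A B [inA inB /gr_chain_sym].
- by move=> A B C [inA _ AB] [_ inC BC]; split=> //; apply: rt_trans AB BC.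
- move=> A B C [inA inB AB] inC.
  by split; rewrite ?inM_msetD //; apply: gr_chain_msetD2r.
Qed.

Lemma gr_step_residuals A B :
  gr_step A B ->
  [/\ simS gens (A `\` A `&` B) (B `\` A `&` B),
      (gdeg deg (A `\` A `&` B) <= d)%N & (gdeg deg (B `\` A `&` B) <= d)%N].
Proof.
case=> inA inB eqAB; rewrite geq_max => /andP[degA degB].
split=> //; split.
- exact: inM_msubset (msubsetDl _ _) inA.
- exact: inM_msubset (msubsetDl _ _) inB.
- by apply: (@addIr _ (evalM (A `&` B))); rewrite -!evalM_msetD !msetBDK ?msubsetIl ?msubsetIr.
Qed.

End GradedChains.

Lemma congruenceM_simS n (gens : seq 'rV[int]_n) : congruenceM gens (simS gens).
Proof.
split.
- by move=> A B [].
- by move=> A inA; split.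
- by move=> A B [inA inB eqAB]; split.
- by move=> A B C [inA _ eqAB] [_ inC eqBC]; split; rewrite // eqAB.
- move=> A B C [inA inB eqAB] inC.
  by split; rewrite ?inM_msetD ?evalM_msetD ?eqAB.
Qed.

Lemma congruenceM_clos_refl_trans n (gens : seq 'rV[int]_n) C R A B :
  congruenceM gens C -> (forall P Q, R P Q -> C P Q) ->
  clos_refl_trans _ R A B -> inM gens A -> C A B.
Proof.
case=> C_mem C_refl _ C_trans _ RC.
elim=> [P Q /RC // | P /C_refl // | P Q S _ IHPQ _ IHQS inP].
have PQ := IHPQ inP; have [_ inQ] := C_mem _ _ PQ.
exact: C_trans PQ (IHQS inQ).
Qed.

Lemma gen_bound_of_gr_catenary_bound n (gens : seq 'rV[int]_n) deg d :
  gr_catenary_bound gens deg d -> gen_bound gens deg d.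
Proof.
move=> /gr_catenary_boundP cat.
exists (fun P Q => [/\ simS gens P Q, gdeg deg P <= d & gdeg deg Q <= d]%N).
split; last by move=> P Q [].
split=> [P Q [[]] // | A B]; split; last first.
  by apply; [exact: congruenceM_simS | move=> P Q []].
move=> AB C congC LamC; have [inA _ _] := AB.
apply: (congruenceM_clos_refl_trans congC _ (cat A B AB) inA) => X Y XY.
have [XY0 degX degY] := gr_step_residuals XY; have [inX _ _ _] := XY.
case: congC => _ _ _ _ /(_ _ _ (X `&` Y) (LamC _ _ (And3 XY0 degX degY))).
rewrite !msetBDK ?msubsetIl ?msubsetIr //; apply.
exact: inM_msubset (msubsetIl X Y) inX.
Qed.

Lemma gr_catenary_bound_of_gen_bound n (gens : seq 'rV[int]_n) deg d :
  gen_bound gens deg d -> gr_catenary_bound gens deg d.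
Proof.
case=> Lam [[LamM LamS] degLam]; apply/gr_catenary_boundP => A B /LamS AB.
suff [] : [/\ inM gens A, inM gens B & gr_chain gens deg d A B] by [].
apply: AB (congruenceM_gr_chain gens deg d) _ => P Q PQ.
have [inP inQ] := LamM _ _ PQ; have [degP degQ] := degLam _ _ PQ.
have [_ _ eqPQ] : simS gens P Q by apply/LamS => C _; apply.
split=> //; apply: rt_step; split=> //.
by apply: leq_trans (dgr_le_gdeg deg P Q) _; rewrite geq_max degP degQ.
Qed.

Lemma is_min_nat_ext (P Q : nat -> Prop) d :
  (forall e, P e <-> Q e) -> is_min_nat P d <-> is_min_nat Q d.
Proof.
move=> PQ; split=> [[/PQ Pd minP] | [/PQ Qd minQ]].
  by split=> // e /PQ /minP.
by split=> // e /PQ /minQ.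
Qed.

Theorem proposition3p2 (n : nat) (gens : seq 'rV[int]_n)
    (deg : 'rV[int]_n -> nat) :
  reduced gens -> graded gens deg -> connected gens deg ->
  forall d : nat,
    is_min_nat (gr_catenary_bound gens deg) d <->
    is_min_nat (gen_bound gens deg) d.
Proof.
move=> _ _ _ d; apply: is_min_nat_ext => e; split.
- exact: gen_bound_of_gr_catenary_bound.
- exact: gr_catenary_bound_of_gen_bound.
Qed.
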